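(* Let $(T^{E}_{m},T^{\mathbb{K}}_{m})_{m\in M}$ be a strong generator for $(\mathcal{FV},E)$. If one of the following conditions holds, then $\mathcal{FV}(\Omega,E)\subset\mathcal{FV}(\Omega,E)_\kappa$: (a) $\mathcal{FV}(\Omega)$ is a semi-Montel space; (b) for every $f\in\mathcal{FV}(\Omega,E)$, $j\in J$, $m\in M$ there is a precompact set $K\subset E$ with $N_{j,m}(f)\subset K$; (c) $E$ is a semi-Montel space or a Schwartz space; (d) there are a set $X$, a family $\mathfrak{K}$ of sets with $\bigcup_{K\in\mathfrak{K}}K\subset X$ and a map $\pi\colon\bigcup_{m\in M}\omega_m\to X$ such that every $f\in\mathcal{FV}(\Omega,E)$ satisfies: for all $\varepsilon>0$, $j\in J$, $m\in M$, $\alpha\in\mathfrak{A}$ there is $K\in\mathfrak{K}$ with (i) $\sup_{x\in\omega_m,\ \pi(x)\notin K}p_\alpha(T^E_m(f)(x))\nu_{j,m}(x)<\varepsilon$ and (ii) $\{T^E_m(f)(x)\nu_{j,m}(x): x\in\omega_m,\ \pi(x)\in K\}$ is precompact in $E$.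
   Context: $\mathbb{K}\in\{\mathbb{R},\mathbb{C}\}$, $E$ a non-trivial locally convex Hausdorff space over $\mathbb{K}$ with directed fundamental system of seminorms $(p_\alpha)_{\alpha\in\mathfrak{A}}$. Let $\Omega$ be a non-empty set, $J,M$ non-empty index sets, $(\omega_m)_{m\in M}$ non-empty sets and $\nu_{j,m}\colon\omega_m\to[0,\infty)$ such that for all $m$, $x\in\omega_m$ some $\nu_{j,m}(x)>0$. For $Y\in\{\mathbb{K},E\}$ (for $\mathbb{K}$ only $|\cdot|$), let $\operatorname{AP}(\Omega,Y)\subset Y^\Omega$ be a linear subspace and $T^Y_m\colon\operatorname{dom}T^Y_m\to Y^{\omega_m}$ linear maps on linear subspaces $\operatorname{dom}T^Y_m\subset Y^\Omega$. $\mathcal{FV}(\Omega,Y):=\{f\in\operatorname{AP}(\Omega,Y)\cap\bigcap_m\operatorname{dom}T^Y_m: |f|_{j,m,\alpha}:=\sup_{x\in\omega_m}p_\alpha(T^Y_m(f)(x))\nu_{j,m}(x)<\infty\ \forall j,m,\alpha\}$ with these seminorms; $\mathcal{FV}(\Omega):=\mathcal{FV}(\Omega,\mathbb{K})$. Dom-space: Hausdorff, directed seminorms, and for $Y=\mathbb{K}$ all point evaluations $\delta_x$ are in $\mathcal{FV}(\Omega)'$. Generator for $(\mathcal{FV},E)$: $(T^E_m,T^{\mathbb{K}}_m)_{m\in M}$ with $\mathcal{FV}(\Omega)$, $\mathcal{FV}(\Omega,E)$ dom-spaces over the same $J,M,\omega_m,\nu_{j,m}$. Strong: for all $e'\in E'$,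 $f\in\mathcal{FV}(\Omega,E)$, $m$: $e'\circ f\in\operatorname{AP}(\Omega,\mathbb{K})\cap\operatorname{dom}T^{\mathbb{K}}_m$ and $T^{\mathbb{K}}_m(e'\circ f)=e'\circ T^E_m(f)$ on $\omega_m$. $\mathcal{FV}(\Omega,E)_\sigma:=\{f\colon\Omega\to E: e'\circ f\in\mathcal{FV}(\Omega)\ \forall e'\in E'\}$, $R_f(e'):=e'\circ f$; $B_\alpha:=\{x\in E: p_\alpha(x)<1\}$ with polar $B_\alpha^\circ$; $\mathcal{FV}(\Omega,E)_\kappa:=\{f\in\mathcal{FV}(\Omega,E)_\sigma: R_f(B_\alpha^\circ)$ relatively compact in $\mathcal{FV}(\Omega)$ for every $\alpha\}$. $N_{j,m}(f):=\{T^E_m(f)(x)\nu_{j,m}(x): x\in\omega_m\}$. *)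

From mathcomp Require Import all_boot all_algebra.
From mathcomp Require Import classical_sets reals constructive_ereal ereal.
From mathcomp Require Import complex.
From Stdlib Require List.
Unset Printing Implicit Defensive.
Import GRing.Theory Num.Theory.
Local Open Scope ring_scope.
Local Open Scope classical_set_scope.

(* Generic topological notions for a set S (a subset of a type V with a     *)
(* subtraction) carrying the locally convex topology generated by a         *)
(* DIRECTED family of (extended-real valued) seminorms sn : I -> V -> \bar R.*)
(* Since the family is directed, the open balls                              *)
(*   {y | sn i (y - x) < e}  (i in I, e > 0)                                *)
(* form a neighbourhood basis of x.                                         *)
Section SeminormTopology.
Context {R : realType} {V I : Type}.
Variables (sub : V -> V -> V) (sn : I -> V -> \bar R).

Definition sball (i : I) (x : V) (e : R) : set V :=
  [set y | (sn i (sub y x) < e%:E)%E].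

Definition sopen (S U : set V) : Prop :=
  U `<=` S /\
  forall x, U x -> exists i (e : R), 0 < e /\ (sball i x e `&` S `<=` U).

Definition sclosure (S A : set V) : set V :=
  [set x | S x /\ forall i (e : R), 0 < e -> exists a, A a /\ sball i x e a].

Definition scompact (S C : set V) : Prop :=
  C `<=` S /\
  forall (Idx : Type) (U : Idx -> set V),
    (forall k, sopen S (U k)) ->
    C `<=` (fun x => exists k, U k x) ->
    exists s : seq Idx, C `<=` (fun x => exists k, List.In k s /\ U k x).

Definition srelcompact (S A : set V) : Prop :=
  A `<=` S /\ scompact S (sclosure S A).

Definition sbounded (S A : set V) : Prop :=
  A `<=` S /\ forall i, exists C : R, forall a, A a -> (sn i a <= C%:E)%E.

Definition ssemi_montel (S : set V) : Prop :=
  forall A, sbounded S A -> srelcompact S A.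

Definition sprecompact (A : set V) : Prop :=
  forall i (e : R), 0 < e ->
    exists s : seq V, A `<=` (fun x => exists v, List.In v s /\ sball i v e x).

Definition sschwartz : Prop :=
  forall i, exists i', forall (e : R), 0 < e ->
    exists s : seq V,
      [set x | (sn i' x < 1%:E)%E] `<=` (fun x => exists v, List.In v s /\ sball i v e x).

Definition shausdorff (z0 : V) (S : set V) : Prop :=
  forall x, S x -> (forall i, sn i x = 0%E) -> x = z0.

Definition sdirected (S : set V) : Prop :=
  forall i1 i2 : I, exists (i3 : I) (C : R), 0 < C /\
    forall x, S x -> (sn i1 x <= C%:E * sn i3 x)%E /\ (sn i2 x <= C%:E * sn i3 x)%E.

End SeminormTopology.

(* The scalar field K (R or C), with absolute value absK : K -> R and the   *)
(* embedding iota : R -> K of the reals.                                    *)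
Section LCS.
Context {R : realType} {K : numFieldType}.
Variables (absK : K -> R).
Context {E : lmodType K} {A : Type}.
Variable (p : A -> E -> R).

Definition pE : A -> E -> \bar R := fun a x => (p a x)%:E.
Definition subE : E -> E -> E := fun x y => x - y.

Definition is_lcHs : Prop :=
  [/\ inhabited A,
      (exists x : E, x != 0),
      (forall a x, 0 <= p a x) /\
      (forall a x y, p a (x + y) <= p a x + p a y) /\
      (forall a (l : K) x, p a (l *: x) = absK l * p a x),
      sdirected pE setT
    & shausdorff pE 0 setT].

Definition edual (e : E -> K) : Prop :=
  (forall (l : K) x y, e (l *: x + y) = l * e x + e y) /\
  (forall x (eps : R), 0 < eps -> exists a (d : R), 0 < d /\
     forall y, sball subE pE a x d y -> absK (e y - e x) < eps).

Definition semi_montelE : Prop := ssemi_montel subE pE setT.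
Definition schwartzE : Prop := sschwartz subE pE.
Definition precompactE (B : set E) : Prop := sprecompact subE pE B.

Definition polarB (a : A) : set (E -> K) :=
  [set e | edual e /\ forall x, p a x < 1 -> absK (e x) <= 1].

End LCS.

Section FV.
Context {R : realType} {K : numFieldType}.
Variables (absK : K -> R).
Context {E : lmodType K} {A : Type}.
Variable (p : A -> E -> R).
Context {Omega J M : Type} {omega : M -> Type}.
Variable (nu : J -> forall m, omega m -> R).

Definition lin_subspaceK (S : set (Omega -> K)) : Prop :=
  S (fun _ => 0) /\
  forall (l : K) f g, S f -> S g -> S (fun x => l * f x + g x).
Definition lin_subspaceE (S : set (Omega -> E)) : Prop :=
  S (fun _ => 0) /\
  forall (l : K) f g, S f -> S g -> S (fun x => l *: f x + g x).
Definition lin_onK {Y : Type} (S : set (Omega -> K)) (T : (Omega -> K) -> Y -> K) : Prop :=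
  forall (l : K) f g, S f -> S g ->
    T (fun x => l * f x + g x) = (fun y => l * T f y + T g y).
Definition lin_onE {Y : Type} (S : set (Omega -> E)) (T : (Omega -> E) -> Y -> E) : Prop :=
  forall (l : K) f g, S f -> S g ->
    T (fun x => l *: f x + g x) = (fun y => l *: T f y + T g y).

Variables (APK : set (Omega -> K)) (domK : M -> set (Omega -> K))
          (TK : forall m : M, (Omega -> K) -> omega m -> K).
Variables (APE : set (Omega -> E)) (domE : M -> set (Omega -> E))
          (TE : forall m : M, (Omega -> E) -> omega m -> E).

Definition snK (jm : J * M) (f : Omega -> K) : \bar R :=
  let: (j, m) := jm in
  ereal_sup (range (fun x : omega m => (absK (TK m f x) * nu j m x)%:E)).
Definition snE (jma : J * M * A) (f : Omega -> E) : \bar R :=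
  let: (j, m, a) := jma in
  ereal_sup (range (fun x : omega m => (p a (TE m f x) * nu j m x)%:E)).

Definition subK_fun : (Omega -> K) -> (Omega -> K) -> Omega -> K :=
  fun f g x => f x - g x.
Definition subE_fun : (Omega -> E) -> (Omega -> E) -> Omega -> E :=
  fun f g x => f x - g x.

Definition FVK : set (Omega -> K) :=
  [set f : Omega -> K | APK f /\ (forall m, domK m f) /\ forall jm, (snK jm f < +oo)%E].
Definition FVE : set (Omega -> E) :=
  [set f : Omega -> E | APE f /\ (forall m, domE m f) /\ forall jma, (snE jma f < +oo)%E].

Definition dom_spaceK : Prop :=
  [/\ shausdorff snK (fun _ => 0) FVK,
      sdirected snK FVK
    & forall x : Omega,
        (* the point evaluation delta_x is continuous on FV(Omega)
           (it is trivially linear) *)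
        forall f, FVK f -> forall (eps : R), 0 < eps ->
          exists jm (d : R), 0 < d /\
            forall g, FVK g -> sball subK_fun snK jm f d g ->
              absK (g x - f x) < eps].
Definition dom_spaceE : Prop :=
  shausdorff snE (fun _ => 0) FVE /\ sdirected snE FVE.

Definition generator : Prop :=
  [/\ lin_subspaceK APK /\ lin_subspaceE APE,
      (forall m, lin_subspaceK (domK m) /\ lin_onK (domK m) (TK m)),
      (forall m, lin_subspaceE (domE m) /\ lin_onE (domE m) (TE m)),
      dom_spaceK & dom_spaceE].

Definition strong_generator : Prop :=
  generator /\
  forall e, edual absK p e -> forall f, FVE f -> forall m,
    APK (e \o f) /\ domK m (e \o f) /\ TK m (e \o f) = e \o TE m f.

Definition FVE_sigma : set (Omega -> E) :=
  [set f : Omega -> E | forall e, edual absK p e -> FVK (e \o f)].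
Definition Rf (f : Omega -> E) : (E -> K) -> Omega -> K := fun e => e \o f.
Definition FVE_kappa : set (Omega -> E) :=
  [set f : Omega -> E | FVE_sigma f /\
     forall a, srelcompact subK_fun snK FVK (Rf f @` polarB absK p a)].

Variable (iota : R -> K).
Definition Njm (j : J) (m : M) (f : Omega -> E) : set E :=
  [set iota (nu j m x) *: TE m f x | x in [set: omega m]].

Definition cond_a : Prop := ssemi_montel subK_fun snK FVK.
Definition cond_b : Prop :=
  forall f, FVE f -> forall j m, exists C : set E, precompactE p C /\ Njm j m f `<=` C.
Definition cond_c : Prop := semi_montelE p \/ schwartzE p.
Definition cond_d : Prop :=
  exists (X : Type) (KK : set (set X)) (pi : forall m, omega m -> X),
    forall f, FVE f -> forall (eps : R), 0 < eps -> forall j m a,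
      exists C : set X, KK C /\
        (ereal_sup [set (p a (TE m f x) * nu j m x)%:E | x in [set x : omega m | ~ C (pi m x)]]
           < eps%:E)%E /\
        precompactE p [set iota (nu j m x) *: TE m f x | x in [set x : omega m | C (pi m x)]].

End FV.

Definition lemma3p13_stmt (R : realType) (K : numFieldType)
    (absK : K -> R) (iota : R -> K) : Prop :=
  forall (E : lmodType K) (A : Type) (p : A -> E -> R),
  is_lcHs absK p ->
  forall (Omega J M : Type) (omega : M -> Type) (nu : J -> forall m, omega m -> R),
  inhabited Omega -> inhabited J -> inhabited M -> (forall m, inhabited (omega m)) ->
  (forall j m x, 0 <= nu j m x) ->
  (forall m (x : omega m), exists j, 0 < nu j m x) ->
  forall (APK : set (Omega -> K)) (domK : M -> set (Omega -> K))
         (TK : forall m : M, (Omega -> K) -> omega m -> K)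
         (APE : set (Omega -> E)) (domE : M -> set (Omega -> E))
         (TE : forall m : M, (Omega -> E) -> omega m -> E),
  @strong_generator R K absK E A p Omega J M omega nu APK domK TK APE domE TE ->
  @cond_a R K absK Omega J M omega nu APK domK TK \/
  @cond_b R K E A p Omega J M omega nu APE domE TE iota \/
  @cond_c R K E A p \/
  @cond_d R K E A p Omega J M omega nu APE domE TE iota ->
  @FVE R K E A p Omega J M omega nu APE domE TE `<=`
    @FVE_kappa R K absK E A p Omega J M omega nu APK domK TK.

From Pilot Require Import Defs.
From mathcomp Require Import all_boot all_order all_algebra.
From mathcomp Require Import boolp classical_sets filter reals constructive_ereal ereal.
From mathcomp Require Import complex.
From mathcomp Require Import ring lra.
Import Order.TTheory GRing.Theory Num.Theory.
Local Open Scope ring_scope.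
Local Open Scope classical_set_scope.

(* For f in FV(Omega, E), the map e |-> e \o f sends the polar B_alpha° into
   FV(Omega), with |e \o f|_{j,m} <= |f|_{j,m,alpha}.  Under (a) this image is bounded,
   hence relatively compact.  Under (b), (c) or (d) every N_{j,m}(f) is precompact in E,
   and then the image is compact: an ultrafilter on the polar converges pointwise (closed
   balls of K are compact) to some e in the polar, and since the polar is equicontinuous
   this convergence is uniform on the precompact sets N_{j,m}(f), i.e. the images
   converge in FV(Omega).  Convergence of all ultrafilters along the map yields both
   closedness and compactness of the image. *)

Lemma ultra_filter_from {I T : Type} (D : set I) (B : I -> set T) :
  (exists i, D i) ->
  (forall i j, D i -> D j -> exists2 k, D k & B k `<=` B i `&` B j) ->
  (forall i, D i -> B i !=set0) ->
  exists U : set_system T, UltraFilter U /\ forall i, D i -> U (B i).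
Proof.
move=> D0 Bdir Bne.
have [U [UU FU]] := ultraFilterLemma (filter_from_proper (filter_from_filter D0 Bdir) Bne).
by exists U; split=> // i Di; apply: FU; exists i.
Qed.

Definition bounded_ultra_cvg {R : realType} {K : zmodType} (absK : K -> R) : Prop :=
  forall (T : Type) (U : set_system T), UltraFilter U ->
  forall (phi : T -> K) (c : R), U [set t | absK (phi t) <= c] ->
  exists L, forall eps, 0 < eps -> U [set t | absK (phi t - L) < eps].

Lemma bounded_ultra_cvg_real (R : realType) : bounded_ultra_cvg (fun x : R => `|x|).
Proof.
move=> T U UU phi c Uc.
pose S := [set t : R | U [set x | t <= phi x]].
have S_ub : ubound S c.
  move=> t St; rewrite leNgt; apply/negP => ct; apply: (@filter_not_empty _ U).
  apply: filterS (filterI St Uc) => x [/= tx]; rewrite ler_norml => /andP[_ xc].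
  lra.
have S_sup : has_sup S.
  split; last by exists c.
  by exists (- c); apply: filterS Uc => x /=; rewrite ler_norml => /andP[].
exists (sup S) => eps eps_gt0.
have [t St supSt] := sup_adherent eps_gt0 S_sup.
have above : U [set x | sup S - eps < phi x].
  by apply: filterS St => x /=; apply: lt_le_trans.
have below : U [set x | phi x < sup S + eps].
  have [Uge|Ult] := in_ultra_setVsetC [set x | sup S + eps / 2 <= phi x] UU.
    by have := sup_upper_bound S_sup Uge; lra.
  by apply: filterS Ult => x /negP; rewrite -ltNge /= => ?; lra.
apply: filterS (filterI above below) => x [/= ? ?].
by rewrite ltr_norml; apply/andP; split; lra.
Qed.

Section ComplexModulus.
Variable R : realType.
Local Notation normc := (@Normc.normc R).

Lemma normc_ge0 (z : R[i]) : 0 <= normc z.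
Proof. by case: z => a b /=; exact: sqrtr_ge0. Qed.

Lemma abs_Re_le_normc (z : R[i]) : `|complex.Re z| <= normc z.
Proof. by case: z => a b /=; rewrite -sqrtr_sqr ler_wsqrtr // lerDl sqr_ge0. Qed.

Lemma abs_Im_le_normc (z : R[i]) : `|complex.Im z| <= normc z.
Proof. by case: z => a b /=; rewrite -sqrtr_sqr ler_wsqrtr // lerDr sqr_ge0. Qed.

Lemma normc_le_abs_ReIm (z : R[i]) : normc z <= `|complex.Re z| + `|complex.Im z|.
Proof.
case: z => a b /=.
have -> : `|a| + `|b| = Num.sqrt ((`|a| + `|b|) ^+ 2).
  by rewrite sqrtr_sqr; apply/esym/ger0_norm; rewrite addr_ge0.
apply: ler_wsqrtr.
rewrite sqrrD -(real_normK (num_real a)) -(real_normK (num_real b)).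
by rewrite -addrA lerD2l addrC lerDl mulrn_wge0 // mulr_ge0.
Qed.

Lemma normc_real (r : R) : 0 <= r -> normc (r%:C)%C = r.
Proof. by move=> r_ge0 /=; rewrite expr0n /= addr0 sqrtr_sqr ger0_norm. Qed.

Lemma bounded_ultra_cvg_complex : bounded_ultra_cvg normc.
Proof.
move=> T U UU phi c Uc.
have bounded_part (part : R[i] -> R) : (forall z, `|part z| <= normc z) ->
    exists L, forall eps, 0 < eps -> U [set t | `|part (phi t) - L| < eps].
  move=> part_le; apply: (@bounded_ultra_cvg_real R T U UU _ c).
  by apply: filterS Uc => t; apply: le_trans.
have [L1 cvg1] := bounded_part _ abs_Re_le_normc.
have [L2 cvg2] := bounded_part _ abs_Im_le_normc.
exists (L1 +i* L2)%C => eps eps_gt0.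
have eps2_gt0 : 0 < eps / 2 by rewrite divr_gt0.
apply: filterS (filterI (cvg1 _ eps2_gt0) (cvg2 _ eps2_gt0)) => t [/= lt1 lt2].
apply: le_lt_trans (normc_le_abs_ReIm _) _; rewrite (splitr eps).
by move: lt1 lt2; case: (phi t) => a b /= lt1 lt2; apply: ltrD.
Qed.

End ComplexModulus.

Set Implicit Arguments.
(* [abs_ultra_cvg] is the compactness of the closed balls of [K], phrased with
   ultrafilters. *)
Record locally_compact_abs {R : realType} {K : numFieldType}
    (absK : K -> R) (iota : R -> K) : Prop := {
  abs_ge0 : forall x, 0 <= absK x;
  abs0 : absK 0 = 0;
  abs_eq0 : forall x, absK x = 0 -> x = 0;
  absD : forall x y, absK (x + y) <= absK x + absK y;
  absM : forall x y, absK (x * y) = absK x * absK y;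
  abs_iota : forall r, 0 <= r -> absK (iota r) = r;
  abs_ultra_cvg : bounded_ultra_cvg absK }.
Unset Implicit Arguments.

Lemma locally_compact_abs_real (R : realType) :
  locally_compact_abs (fun x : R => `|x|) (fun r : R => r).
Proof.
split; [exact: normr_ge0 | exact: normr0 | by move=> x /normr0_eq0 |
  exact: ler_normD | exact: normrM | exact: ger0_norm | exact: bounded_ultra_cvg_real].
Qed.

Lemma locally_compact_abs_complex (R : realType) :
  locally_compact_abs (fun z : R[i] => Normc.normc z) (fun r : R => (r%:C)%C).
Proof.
split; [exact: normc_ge0 | exact: Normc.normc0 | exact: Normc.eq0_normc |
  exact: le_normcD | exact: Normc.normcM | exact: normc_real |
  exact: bounded_ultra_cvg_complex].
Qed.

Section UltraCompactness.
Context {R : realType} {V I T : Type}.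
Variables (sub : V -> V -> V) (sn : I -> V -> \bar R) (S : set V).
Hypothesis I0 : inhabited I.
Hypothesis sub_closed : forall {x y}, S x -> S y -> S (sub x y).
Hypothesis sn_ge0 : forall i {x}, S x -> (0 <= sn i x)%E.
Hypothesis sn_sub_self : forall i {x}, S x -> sn i (sub x x) = 0%E.
Hypothesis sn_subC : forall i {x y}, S x -> S y -> sn i (sub x y) = sn i (sub y x).
Hypothesis sn_sub_triangle : forall i {x y z}, S x -> S y -> S z ->
  (sn i (sub x z) <= sn i (sub x y) + sn i (sub y z))%E.
Hypothesis sn_separated : forall {x y}, S x -> S y ->
  (forall i, sn i (sub x y) = 0%E) -> x = y.
Hypothesis sn_directed : sdirected sn S.
Variables (P : set T) (g : T -> V).
Hypothesis gPS : g @` P `<=` S.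
Hypothesis ultra_cvg : forall U : set_system T, UltraFilter U -> U P ->
  exists2 t, P t & forall i (d : R), 0 < d ->
    U [set e | (sn i (sub (g e) (g t)) < d%:E)%E].

Let gS {e : T} : P e -> S (g e). Proof. by move=> Pe; apply: gPS; exact: imageP. Qed.

Lemma ultra_image_cover {Idx : Type} (W : Idx -> set V) :
  (forall k, sopen sub sn S (W k)) -> g @` P `<=` (fun x => exists k, W k x) ->
  exists s : seq Idx, g @` P `<=` (fun x => exists k, List.In k s /\ W k x).
Proof.
move=> Wopen cover; apply: contrapT => nocover.
pose B (s : seq Idx) := [set e | P e /\ ~ exists k, List.In k s /\ W k (g e)].
have [U [UU UB]] : exists U, UltraFilter U /\ forall s, setT s -> U (B s).
  apply: ultra_filter_from; first by exists [::].
    move=> s1 s2 _ _; exists (s1 ++ s2) => // e [Pe notW].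
    by split; split=> // -[k [sk Wk]]; apply: notW; exists k; split=> //;
      apply: List.in_or_app; [left | right].
  move=> s _; apply: contrapT => Bs0; apply: nocover; exists s => _ [e Pe <-].
  by apply: contrapT => notW; apply: Bs0; exists e.
have [t Pt cvg_t] := ultra_cvg U UU (filterS (fun e => @proj1 _ _) (UB [::] Logic.I)).
have [k Wk] := cover _ (imageP g Pt).
have [i [d [d_gt0 ballW]]] := (Wopen k).2 _ Wk.
have [e [[Pe notW] near_e]] := filter_ex (filterI (UB [:: k] Logic.I) (cvg_t i d d_gt0)).
by apply: notW; exists k; split; [left | apply: ballW; split=> //; exact: gS].
Qed.

Lemma ultra_image_closed : sclosure sub sn S (g @` P) `<=` g @` P.
Proof.
move=> x0 [Sx0 near_x0].
pose B (id : I * R) := [set e | P e /\ (sn id.1 (sub (g e) x0) < id.2%:E)%E].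
have [U [UU UB]] : exists U, UltraFilter U /\ forall id, 0 < id.2 -> U (B id).
  apply: (@ultra_filter_from _ _ [set id | 0 < id.2]).
  - by case: I0 => i; exists (i, 1) => /=.
  - move=> [i1 d1] [i2 d2] /= d1_gt0 d2_gt0.
    have [i [C [C_gt0 dom]]] := sn_directed i1 i2.
    exists (i, C^-1 * Num.min d1 d2) => [|e [Pe /= near_e]].
      by rewrite /= mulr_gt0 ?invr_gt0 // lt_min d1_gt0 d2_gt0.
    have [le1 le2] := dom _ (sub_closed (gS Pe) Sx0).
    have lt_min : (C%:E * sn i (sub (g e) x0) < (Num.min d1 d2)%:E)%E.
      by rewrite -lte_pdivlMl // -EFinM.
    by split; split=> //=; [apply: le_lt_trans le1 _ | apply: le_lt_trans le2 _];
      apply: lt_le_trans lt_min _; rewrite lee_fin ge_min lexx ?orbT.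
  - by move=> [i d] /= d_gt0; have [_ [[e Pe <-] near_e]] := near_x0 i d d_gt0; exists e.
have [i0] := I0.
have [t Pt cvg_t] := ultra_cvg U UU (filterS (fun e => @proj1 _ _) (UB (i0, 1) ltr01)).
exists t => //; apply: sn_separated; [exact: gS | exact: Sx0 | move=> i].
apply/le_anti/andP; split; last exact/sn_ge0/sub_closed/Sx0/gS.
apply/lee_addgt0Pr => d d_gt0; rewrite add0e.
have d2_gt0 : 0 < d / 2 by rewrite divr_gt0.
have [e [[Pe near_e] close_e]] :=
  filter_ex (filterI (UB (i, d / 2) d2_gt0) (cvg_t i _ d2_gt0)).
rewrite (splitr d) EFinD; apply/ltW/(le_lt_trans (sn_sub_triangle i (gS Pt) (gS Pe) Sx0)).
by rewrite (sn_subC i (gS Pt) (gS Pe)); exact: lteD.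
Qed.

Lemma ultra_image_relcompact : srelcompact sub sn S (g @` P).
Proof.
have image_closure : g @` P `<=` sclosure sub sn S (g @` P).
  move=> _ [e Pe <-]; split=> [|i d d_gt0]; first exact: gS.
  exists (g e); split; first exact: imageP.
  by rewrite /sball /= sn_sub_self ?lte_fin //; exact: gS.
split=> //; split=> [x [] // | Idx W Wopen cover].
have [s cover_s] := ultra_image_cover W Wopen (subset_trans image_closure cover).
by exists s; apply: subset_trans ultra_image_closed cover_s.
Qed.

End UltraCompactness.

Section WeightedSpaces.
Context {R : realType} {K : numFieldType} (absK : K -> R) (iota : R -> K).
Hypothesis hK : locally_compact_abs absK iota.

Lemma abs1 : absK 1 = 1.
Proof.
have /eqP := absM hK 1 1; rewrite mulr1 -subr_eq0 -{1}[absK 1]mulr1 -mulrBr mulf_eq0.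
case/orP=> [/eqP/(abs_eq0 hK)/eqP | ]; first by rewrite oner_eq0.
by rewrite subr_eq0 => /eqP.
Qed.

Lemma absN x : absK (- x) = absK x.
Proof.
have absN1 : absK (-1) = 1.
  apply/eqP; rewrite -(sqrp_eq1 (abs_ge0 hK _)) expr2 -(absM hK) mulrNN mulr1.
  by rewrite abs1.
by rewrite -mulN1r (absM hK) absN1 mul1r.
Qed.

Lemma absB_le x y : absK (x - y) <= absK x + absK y.
Proof. by rewrite -(absN y); exact: (absD hK). Qed.

Lemma absV x : x != 0 -> absK x^-1 = (absK x)^-1.
Proof.
move=> x_neq0; have absx_neq0 : absK x != 0.
  by apply: contra_neq x_neq0; exact: (abs_eq0 hK).
by apply: (mulIf absx_neq0); rewrite -(absM hK) !mulVf // abs1.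
Qed.

Context {E : lmodType K} {A : Type} (p : A -> E -> R).
Hypothesis hE : is_lcHs absK p.

Lemma seminorm_ge0 a x : 0 <= p a x.
Proof. by case: hE => _ _ []. Qed.

Lemma seminormD a x y : p a (x + y) <= p a x + p a y.
Proof. by case: hE => _ _ [_ []]. Qed.

Lemma seminormZ a l x : p a (l *: x) = absK l * p a x.
Proof. by case: hE => _ _ [_ []]. Qed.

Lemma seminorm0 a : p a 0 = 0.
Proof. by rewrite -(scale0r (0 : E)) seminormZ (abs0 hK) mul0r. Qed.

Lemma sball_center a x eps : 0 < eps -> sball subE (pE p) a x eps x.
Proof. by move=> eps_gt0; rewrite /sball /pE /subE /= subrr seminorm0 lte_fin. Qed.

Lemma sball_open a v eps : sopen subE (pE p) setT (sball subE (pE p) a v eps).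
Proof.
split=> // y; rewrite /sball /pE /subE /= lte_fin => yv_lt.
exists a, (eps - p a (y - v)); split=> [|z [+ _]]; first by rewrite subr_gt0.
rewrite /= !lte_fin => zy_lt; rewrite -(subrKA y).
by apply: le_lt_trans (seminormD _ _ _) _; rewrite -ltrBrDr.
Qed.

Definition linear_functional (e : E -> K) : Prop :=
  forall (l : K) x y, e (l *: x + y) = l * e x + e y.

Section LinearFunctional.
Variables (e : E -> K) (e_lin : linear_functional e).

Lemma lfun0 : e 0 = 0.
Proof.
have := e_lin 1 0 0; rewrite scaler0 addr0 mul1r => e0_double.
by apply/(addrI (e 0)); rewrite addr0 -e0_double.
Qed.

Lemma lfunZ l x : e (l *: x) = l * e x.
Proof. by have := e_lin l x 0; rewrite !addr0 lfun0 addr0. Qed.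

Lemma lfunB x y : e (x - y) = e x - e y.
Proof. by have := e_lin (-1) y x; rewrite scaleN1r mulN1r addrC [_ + e x]addrC. Qed.

(* Rescale [y] into the ball of radius [d] by the factor [d / (p a y + t)], [t > 0]. *)
Lemma lfun_le_seminorm a d : 0 < d -> (forall y, p a y < d -> absK (e y) <= 1) ->
  forall y, absK (e y) <= p a y / d.
Proof.
move=> d_gt0 ball_le y; rewrite ler_pdivlMr //; apply/ler_addgt0Pr => t t_gt0.
have py_ge0 := seminorm_ge0 a y; have ey_ge0 := abs_ge0 hK (e y).
pose lam := d / (p a y + t).
have lam_gt0 : 0 < lam by rewrite divr_gt0 // ltr_wpDl.
have lam_py : lam * (p a y + t) = d by rewrite /lam mulfVK // gt_eqF // ltr_wpDl.
have := ball_le (iota lam *: y).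
rewrite seminormZ lfunZ (absM hK) (abs_iota hK) ?(ltW lam_gt0) // => scaled_le.
have : lam * absK (e y) <= 1 by apply: scaled_le; nra.
nra.
Qed.

End LinearFunctional.

Lemma dual_le_seminorm {e} : edual absK p e ->
  exists a d, 0 < d /\ forall y, absK (e y) <= p a y / d.
Proof.
move=> [e_lin e_cont]; have [a [d [d_gt0 near0]]] := e_cont 0 1 ltr01.
exists a, d; split=> //; apply: lfun_le_seminorm => // y py_lt.
have := near0 y; rewrite lfun0 // subr0 => /(_ _)/ltW; apply.
by rewrite /sball /pE /subE /= subr0 lte_fin.
Qed.

Lemma polar_le_seminorm {a e} : polarB absK p a e -> forall y, absK (e y) <= p a y.
Proof.
move=> [[e_lin _] ball_le] y; rewrite -[p a y]divr1.
exact: lfun_le_seminorm.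
Qed.

Definition pointwise_limit (U : set_system (E -> K)) (es : E -> K) : Prop :=
  forall y eps, 0 < eps -> U [set e | absK (e y - es y) < eps].

Section PointwiseLimit.
Context {U : set_system (E -> K)} {es : E -> K}.
Context {FU : ProperFilter U}.
Hypothesis es_lim : pointwise_limit U es.

Lemma pointwise_limit_seq (s : seq E) eps : 0 < eps ->
  U [set e | forall v, List.In v s -> absK (e v - es v) < eps].
Proof.
move=> eps_gt0; elim: s => [|v s IHs]; first by apply: filterS filterT => e _ ? [].
by apply: filterS (filterI IHs (es_lim v _ eps_gt0)) => e [close_s close_v] w [<-|/close_s].
Qed.

Lemma pointwise_limit_le (q : E -> R) : U [set e | forall y, absK (e y) <= q y] ->
  forall y, absK (es y) <= q y.
Proof.
move=> Uq y; apply/ler_addgt0Pr => eps eps_gt0.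
have [e [e_le close_e]] := filter_ex (filterI Uq (es_lim y _ eps_gt0)).
rewrite -[es y](subKr (e y)); apply: le_trans (absB_le _ _) _.
by rewrite lerD // ltW.
Qed.

Lemma pointwise_limit_linear : U linear_functional -> linear_functional es.
Proof.
move=> Ulin l x y; apply/eqP; rewrite -subr_eq0; apply/eqP/(abs_eq0 hK)/le_anti/andP.
split; last exact: (abs_ge0 hK).
apply/ler_addgt0Pr => eps eps_gt0; rewrite add0r.
have al2_gt0 : 0 < absK l + 2 by rewrite ltr_wpDl ?(abs_ge0 hK).
pose eta := eps / (absK l + 2).
have eta_gt0 : 0 < eta by rewrite divr_gt0.
have [e [[[e_lin close_lxy] close_x] close_y]] := filter_ex (filterI (filterI (filterI
  Ulin (es_lim (l *: x + y) _ eta_gt0)) (es_lim x _ eta_gt0)) (es_lim y _ eta_gt0)).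
have -> : es (l *: x + y) - (l * es x + es y) =
    - (e (l *: x + y) - es (l *: x + y)) + l * (e x - es x) + (e y - es y).
  by rewrite e_lin; ring.
have -> : eps = eta + absK l * eta + eta by rewrite /eta; field; rewrite gt_eqF.
apply: le_trans (absD hK _ _) _; apply: lerD; last exact: ltW.
apply: le_trans (absD hK _ _) _; rewrite absN (absM hK).
by apply: lerD; [exact: ltW | apply: ler_wpM2l; [exact: (abs_ge0 hK) | exact: ltW]].
Qed.

End PointwiseLimit.

Lemma polar_ultra_limit {a} {U : set_system (E -> K)} : UltraFilter U ->
  U (polarB absK p a) -> exists2 es, polarB absK p a es & pointwise_limit U es.
Proof.
move=> UU UP.
have [es es_lim] : {es : E -> K & pointwise_limit U es}.
  apply: (@choice _ _ (fun y L => forall eps, 0 < eps ->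
    U [set e | absK (e y - L) < eps])) => y.
  apply: (abs_ultra_cvg hK UU (fun e => e y) (p a y)).
  by apply: filterS UP => e /polar_le_seminorm; apply.
have es_le : forall y, absK (es y) <= p a y.
  by apply: (pointwise_limit_le (U := U) es_lim); apply: filterS UP => e /polar_le_seminorm.
have es_lin : linear_functional es.
  by apply: (pointwise_limit_linear (U := U) es_lim); apply: filterS UP => e [[]].
exists es => //; split=> [|x /ltW]; last exact/le_trans/es_le.
split=> // x eps eps_gt0; exists a, eps; split=> // y.
rewrite /sball /pE /subE /= lte_fin -lfunB //; exact/le_lt_trans/es_le.
Qed.

Lemma relcompact_precompact (B : set E) :
  srelcompact subE (pE p) setT B -> Defs.precompactE p B.
Proof.
move=> [_ [_ cpt]] a eps eps_gt0.
have [||s cover_s] := cpt E (fun v => sball subE (pE p) a v eps).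
- by move=> v; exact: sball_open.
- by move=> x _; exists x; exact: sball_center.
exists s => x Bx; apply: cover_s; split=> // i d d_gt0.
by exists x; split=> //; exact: sball_center.
Qed.

Lemma schwartz_bounded_precompact (B : set E) :
  schwartzE p -> sbounded (pE p) setT B -> Defs.precompactE p B.
Proof.
move=> schwartz [_ B_bd] a eps eps_gt0.
have [a' unit_ball_pre] := schwartz a.
have [c B_le] := B_bd a'.
pose r := `|c| + 1.
have r_gt0 : 0 < r by rewrite ltr_wpDl.
have abs_iota_r : absK (iota r) = r by rewrite (abs_iota hK) // ltW.
have iota_r_neq0 : iota r != 0.
  by apply: contraTneq r_gt0 => r0; rewrite -abs_iota_r r0 (abs0 hK) ltxx.
have [s cover_s] := unit_ball_pre (eps / r) (divr_gt0 eps_gt0 r_gt0).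
exists [seq iota r *: v | v <- s] => z Bz.
pose w := (iota r)^-1 *: z.
have [|v [sv wv]] := cover_s w.
  rewrite /= /pE seminormZ absV // abs_iota_r lte_fin mulrC ltr_pdivrMr // mul1r.
  have := B_le z Bz; rewrite /pE lee_fin => /le_lt_trans; apply.
  by apply: le_lt_trans (ler_norm c) _; rewrite ltrDl.
exists (iota r *: v); split; first exact: List.in_map.
move: wv; rewrite /sball /pE /subE /= !lte_fin => wv.
have -> : z - iota r *: v = iota r *: (w - v) by rewrite scalerBr scalerA mulfV // scale1r.
by rewrite seminormZ abs_iota_r mulrC -ltr_pdivlMr.
Qed.

Context {Omega J M : Type} {omega : M -> Type} (nu : J -> forall m, omega m -> R).
Hypothesis nu_ge0 : forall j m x, 0 <= nu j m x.
Hypothesis omega0 : forall m, inhabited (omega m).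
Hypotheses (J0 : inhabited J) (M0 : inhabited M).
Variables (APK : set (Omega -> K)) (domK : M -> set (Omega -> K))
          (TK : forall m : M, (Omega -> K) -> omega m -> K).
Variables (APE : set (Omega -> E)) (domE : M -> set (Omega -> E))
          (TE : forall m : M, (Omega -> E) -> omega m -> E).
Hypothesis hsg : strong_generator absK p nu APK domK TK APE domE TE.

Local Notation FVk := (FVK absK nu APK domK TK).
Local Notation snk := (snK absK nu TK).
Local Notation FVe := (FVE p nu APE domE TE).
Local Notation N := (Njm nu TE iota).

Lemma snK_elem j m g x : ((absK (TK m g x) * nu j m x)%:E <= snk (j, m) g)%E.
Proof. by apply: ereal_sup_ubound; exists x. Qed.

Lemma snK_le j m g c : (forall x, absK (TK m g x) * nu j m x <= c) ->
  (snk (j, m) g <= c%:E)%E.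
Proof. by move=> le_c; apply: ge_ereal_sup => _ [x _ <-]; rewrite lee_fin. Qed.

Lemma snK_ge0 jm g : (0 <= snk jm g)%E.
Proof.
case: jm => j m; have [x] := omega0 m; apply: le_trans (snK_elem j m g x).
by rewrite lee_fin mulr_ge0 ?(abs_ge0 hK).
Qed.

Lemma snK_le_add j m u v w :
  (forall x, absK (TK m u x) <= absK (TK m v x) + absK (TK m w x)) ->
  (snk (j, m) u <= snk (j, m) v + snk (j, m) w)%E.
Proof.
move=> le_vw; apply: ge_ereal_sup => _ [x _ <-].
apply: le_trans (leeD (snK_elem j m v x) (snK_elem j m w x)).
by rewrite -EFinD lee_fin -mulrDl ler_wpM2r.
Qed.

Lemma FVE_le {f} j m a : FVe f -> exists c, forall x, p a (TE m f x) * nu j m x <= c.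
Proof.
move=> [_ [_ /(_ (j, m, a))]].
have elem x : ((p a (TE m f x) * nu j m x)%:E <= snE p nu TE (j, m, a) f)%E.
  by apply: ereal_sup_ubound; exists x.
move: elem; case: (snE p nu TE (j, m, a) f) => [c elem _ | // | elem _].
  by exists c => x; rewrite -lee_fin.
by exists 0 => x; have := elem x; rewrite leeNy_eq.
Qed.

Lemma subK_funE (g h : Omega -> K) : subK_fun g h = (fun x => -1 * h x + g x).
Proof. by apply: funext => x; rewrite /subK_fun mulN1r addrC. Qed.

Lemma TK_sub m g h : domK m g -> domK m h ->
  TK m (subK_fun g h) = fun x => TK m g x - TK m h x.
Proof.
case: hsg => [[_ /(_ m) [_ TK_lin] _ _ _] _] dg dh.
by rewrite subK_funE TK_lin //; apply: funext => x; rewrite mulN1r addrC.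
Qed.

Lemma FVK_sub {g h} : FVk g -> FVk h -> FVk (subK_fun g h).
Proof.
move=> [APg [dg snk_g]] [APh [dh snk_h]].
case: hsg => [[[[_ APK_lin] _] domK_lin _ _ _] _].
split; first by rewrite subK_funE; exact: APK_lin.
split=> [m | [j m]]; first by rewrite subK_funE; apply: (domK_lin m).1.2.
apply: le_lt_trans (lte_add_pinfty (snk_g (j, m)) (snk_h (j, m))).
by apply: snK_le_add => x; rewrite TK_sub //; exact: absB_le.
Qed.

Lemma snK_sub_self jm {g} : FVk g -> snk jm (subK_fun g g) = 0%E.
Proof.
case: jm => j m [_ [dg _]]; apply/le_anti/andP; split; last exact: snK_ge0.
by apply: snK_le => x; rewrite TK_sub // subrr (abs0 hK) mul0r.
Qed.

Lemma snK_subC jm {g h} : FVk g -> FVk h ->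
  snk jm (subK_fun g h) = snk jm (subK_fun h g).
Proof.
case: jm => j m [_ [dg _]] [_ [dh _]]; rewrite /snK !TK_sub //.
by do 2 apply: congr1; apply/funext => x; rewrite -absN opprB.
Qed.

Lemma snK_sub_triangle jm {g h k} : FVk g -> FVk h -> FVk k ->
  (snk jm (subK_fun g k) <= snk jm (subK_fun g h) + snk jm (subK_fun h k))%E.
Proof.
case: jm => j m [_ [dg _]] [_ [dh _]] [_ [dk _]].
apply: snK_le_add => x; rewrite !TK_sub //.
by rewrite -[TK m g x - _](subrKA (TK m h x)); exact: (absD hK).
Qed.

Lemma FVK_sub_separated {g h} : FVk g -> FVk h ->
  (forall jm, snk jm (subK_fun g h) = 0%E) -> g = h.
Proof.
move=> Fg Fh snk_gh0; case: hsg => [[_ _ _ [separated _ _] _] _].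
have /(_ _)/eqP gh0 := congr1 (fun u => u _) (separated _ (FVK_sub Fg Fh) snk_gh0).
by apply: funext => x; apply/eqP; rewrite -subr_eq0 gh0.
Qed.

Lemma TK_comp_dual e f m : edual absK p e -> FVe f -> TK m (e \o f) = e \o TE m f.
Proof. by move=> e_dual Ff; case: (hsg.2 e e_dual f Ff m) => _ []. Qed.

Lemma FVK_comp_dual {e f} : edual absK p e -> FVe f -> FVk (e \o f).
Proof.
move=> e_dual Ff; have [m0] := M0.
split; first by case: (hsg.2 e e_dual f Ff m0).
split=> [m | [j m]]; first by case: (hsg.2 e e_dual f Ff m) => _ [].
have [a [d [d_gt0 e_le]]] := dual_le_seminorm e_dual.
have [c Tf_le] := FVE_le j m a Ff.
apply: le_lt_trans (ltry (c / d)); apply: snK_le => x.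
rewrite TK_comp_dual //=; apply: le_trans (_ : p a (TE m f x) / d * nu j m x <= _).
  by apply: ler_wpM2r => //; exact: e_le.
by rewrite mulrAC ler_pM2r ?invr_gt0.
Qed.

Lemma Rf_polar_bounded f a : FVe f -> sbounded snk FVk (Rf f @` polarB absK p a).
Proof.
move=> Ff; split=> [_ [e [e_dual _] <-] | [j m]]; first exact: FVK_comp_dual.
have [c Tf_le] := FVE_le j m a Ff.
exists c => _ [e [e_dual e_le] <-]; apply: snK_le => x.
rewrite /Rf TK_comp_dual //=; apply: le_trans (Tf_le x).
by apply: ler_wpM2r => //; exact: polar_le_seminorm.
Qed.

(* Equicontinuity of the polar: [p a] controls every [e] in it, so closeness of [e]
   and [es] on a finite [eps]-net of [N j m f] gives closeness on all of it. *)
Lemma polar_ultra_cvg {f a} {U : set_system (E -> K)} {es} {FU : ProperFilter U} :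
  FVe f -> (forall j m, Defs.precompactE p (N j m f)) ->
  U (polarB absK p a) -> polarB absK p a es -> pointwise_limit U es ->
  forall j m eps, 0 < eps ->
    U [set e | (snk (j, m) (subK_fun (Rf f e) (Rf f es)) <= eps%:E)%E].
Proof.
move=> Ff Nf_pre UP Pes es_lim j m eps eps_gt0.
have eps3_gt0 : 0 < eps / 3 by rewrite divr_gt0.
have [s Nf_cover] := Nf_pre j m a _ eps3_gt0.
apply: filterS (filterI UP (pointwise_limit_seq es_lim s _ eps3_gt0)) => e [Pe close_e].
have dom_comp e' : edual absK p e' -> domK m (e' \o f).
  by move=> e'_dual; case: (FVK_comp_dual e'_dual Ff) => _ [].
rewrite /Rf /=; apply: snK_le => x.
have [e_dual es_dual] := (Pe.1, Pes.1).
have [e_lin es_lin] := (e_dual.1, es_dual.1).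
rewrite TK_sub; [|exact: dom_comp e_dual | exact: dom_comp es_dual].
rewrite !TK_comp_dual //=.
set z := iota (nu j m x) *: TE m f x.
have [v [sv zv]] := Nf_cover z (ex_intro2 _ _ x I erefl).
move: zv; rewrite /sball /pE /subE /= lte_fin => zv.
have -> : absK (e (TE m f x) - es (TE m f x)) * nu j m x = absK (e z - es z).
  by rewrite /z !lfunZ // -mulrBr (absM hK) (abs_iota hK) // mulrC.
have -> : e z - es z = e (z - v) + (e v - es v) - es (z - v) by rewrite !lfunB //; ring.
rewrite [eps](_ : _ = eps / 3 + eps / 3 + eps / 3); last by field.
apply: le_trans (absB_le _ _) _; apply: lerD; first apply: le_trans (absD hK _ _) _.
- apply: lerD; apply: ltW; last exact: close_e.
  exact: le_lt_trans (polar_le_seminorm Pe _) zv.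
- exact/ltW/(le_lt_trans (polar_le_seminorm Pes _) zv).
Qed.

Lemma Rf_polar_relcompact f a : FVe f -> (forall j m, Defs.precompactE p (N j m f)) ->
  srelcompact subK_fun snk FVk (Rf f @` polarB absK p a).
Proof.
move=> Ff Nf_pre; have [[_ _ _ [_ snk_directed _] _] _] := hsg.
have JM0 : inhabited (J * M) by case: J0 M0 => j [m]; exact: (inhabits (j, m)).
apply: (ultra_image_relcompact _ _ _ JM0 (@FVK_sub) (fun jm g _ => snK_ge0 jm g)
  snK_sub_self snK_subC snK_sub_triangle (@FVK_sub_separated) snk_directed).
  by move=> _ [e [e_dual _] <-]; exact: FVK_comp_dual.
move=> U UU UP; have [es Pes es_lim] := polar_ultra_limit UU UP.
exists es => // -[j m] d d_gt0; have d2_gt0 : 0 < d / 2 by rewrite divr_gt0.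
apply: filterS (polar_ultra_cvg Ff Nf_pre UP Pes es_lim j m _ d2_gt0) => e /= le_d2.
by apply: le_lt_trans le_d2 _; rewrite lte_fin ltr_pdivrMr // ltr_pMr // ltr1n.
Qed.

Lemma Njm_bounded f j m : FVe f -> sbounded (pE p) setT (N j m f).
Proof.
move=> Ff; split=> // a; have [c Tf_le] := FVE_le j m a Ff.
by exists c => _ [x _ <-]; rewrite /pE lee_fin seminormZ (abs_iota hK) // mulrC.
Qed.

Lemma cond_d_Njm_precompact f j m : FVe f -> cond_d p nu APE domE TE iota ->
  Defs.precompactE p (N j m f).
Proof.
move=> Ff [X [KK [pi dcond]]] a eps eps_gt0.
have [C [_ [tail_lt head_pre]]] := dcond f Ff eps eps_gt0 j m a.
have [s cover_s] := head_pre a eps eps_gt0.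
exists (0 :: s) => _ [x _ <-].
have [Cx | nCx] := pselect (C (pi m x)).
  by have [v [sv xv]] := cover_s _ (ex_intro2 _ _ x Cx erefl); exists v; split; [right|].
exists 0; split; first by left.
rewrite /sball /pE /subE /= subr0 seminormZ (abs_iota hK) // mulrC.
by apply: le_lt_trans tail_lt; apply: ereal_sup_ubound; exists x.
Qed.

Lemma FVE_sub_FVE_kappa :
  cond_a absK nu APK domK TK \/ cond_b p nu APE domE TE iota \/
  cond_c p \/ cond_d p nu APE domE TE iota ->
  FVe `<=` FVE_kappa absK p nu APK domK TK.
Proof.
move=> conds f Ff; split=> [e e_dual | a]; first exact: FVK_comp_dual.
case: conds => [montel | conds]; first exact/montel/Rf_polar_bounded.
apply: Rf_polar_relcompact => // j m.
case: conds => [b | [[montelE | schwartz] | d]].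
- have [C [C_pre NC]] := b f Ff j m.
  move=> i eps eps_gt0; have [s cover_s] := C_pre i eps eps_gt0.
  by exists s; exact: subset_trans NC cover_s.
- exact/relcompact_precompact/montelE/Njm_bounded.
- exact: schwartz_bounded_precompact (Njm_bounded _ _ _ Ff).
- exact: cond_d_Njm_precompact.
Qed.

End WeightedSpaces.
Arguments FVE_sub_FVE_kappa {R K absK iota} hK {E A p} hE {Omega J M omega nu}
  nu_ge0 omega0 J0 M0 {APK domK TK APE domE TE} hsg.

Theorem lemma3p13 (R : realType) :
  lemma3p13_stmt R R (fun x : R => `|x|) (fun r : R => r) /\
  lemma3p13_stmt R R[i] (fun z : R[i] => Normc.normc z) (fun r : R => (r%:C)%C).
Proof.
split=> E A p hE Omega J M omega nu _ J0 M0 omega0 nu_ge0 _ APK domK TK APE domE TE hsg.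
- exact: (FVE_sub_FVE_kappa (locally_compact_abs_real R) hE nu_ge0 omega0 J0 M0 hsg).
- exact: (FVE_sub_FVE_kappa (locally_compact_abs_complex R) hE nu_ge0 omega0 J0 M0 hsg).
Qed.
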